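(* Let $R$ be a noncommutative division algebra over a field $F$. Then for every positive integer $n$ there exist elements $\alpha,\beta\in R$ such that $(\alpha\beta)^n\neq(\beta\alpha)^n$. *)

From mathcomp Require Import all_boot all_algebra.
Set Implicit Arguments. Unset Strict Implicit. Unset Printing Implicit Defensive.
Import GRing.Theory.
Local Open Scope ring_scope.

Definition is_division_ring (R : unitRingType) : Prop :=
  forall x : R, x != 0 -> x \is a GRing.unit.

Definition noncommutative (R : unitRingType) : Prop :=
  exists x y : R, x * y != y * x.

(* If (a b)^n = (b a)^n for all a and b, conjugating by b shows that every
   n-th power is central.
   If the center has more than n elements, write n = m q with q the part of n
   coming from the characteristic.  For central s, the polynomial
   s |-> (x^q + s)^m y - y (x^q + s)^m of degree m vanishes at the q-th powers
   of more than m central elements, and its coefficient of s^(m-1) is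
   m (x^q y - y x^q); hence all q-th powers are central.  In characteristic p
   the inner derivation w |-> w a - a w then satisfies ad_a^q = ad_(a^q) = 0,
   so if ad_a is nonzero it sends some x to 1; then a^-1 (a x) a = a x + 1,
   and raising to the (central) q-th power gives 1 = 0.
   Otherwise the central powers x^(n i), i <= n, collide for every x, so
   x^N = 1 for all x <> 0 with N = n n!, and Herstein's proof of Jacobson's
   theorem applies: the subring F_p[a] is a finite field, X^Q - X splits over
   it, so some w |-> w a - mu w with mu <> a in F_p[a] has a nonzero kernel
   element y; y normalizes F_p[a], and the finite division ring F_p[a][y] is
   commutative by Wedderburn's theorem, contradicting y a = mu y. *)

From HB Require Import structures.
From mathcomp Require Import all_boot all_algebra finfield.
From Stdlib Require Import Classical.

Set Implicit Arguments.
Unset Strict Implicit.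
Unset Printing Implicit Defensive.

Import GRing.Theory.
Local Open Scope ring_scope.

Section FiniteDivisionSubring.
Variables (R : unitRingType) (s : seq R).
Hypotheses (R_div : is_division_ring R) (s_divring : divring_closed (mem s)).

Definition seq_subring := seq_sub s.
HB.instance Definition _ := SubFinite.copy seq_subring (seq_sub s).
HB.instance Definition _ :=
  GRing.SubChoice_isSubUnitRing.Build R _ seq_subring s_divring.

Lemma seq_subring_domain : GRing.integral_domain_axiom seq_subring.
Proof.
move=> x y /(congr1 val) /= xy0; rewrite -!val_eqE /=.
case: eqP => //= /eqP x_neq0.
by rewrite -(mulKr (R_div x_neq0) (ssval y)) xy0 mulr0.
Qed.

HB.instance Definition _ := GRing.PzRing_hasCommutativeMul.Build seq_subring
  (finDomain_mulrC seq_subring_domain).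
HB.instance Definition _ := GRing.ComUnitRing_isIntegral.Build seq_subring
  seq_subring_domain.
HB.instance Definition _ := GRing.UnitRing_isField.Build seq_subring
  (finDomain_field seq_subring_domain).

Definition subring_val (x : seq_subring) : R := val x.
HB.instance Definition _ :=
  GRing.isZmodMorphism.Build _ _ subring_val (fun _ _ => erefl).
HB.instance Definition _ :=
  GRing.isMonoidMorphism.Build _ _ subring_val (conj erefl (fun _ _ => erefl)).

Lemma divring_seq_comm : {in s &, forall x y, x * y = y * x}.
Proof.
move=> x y xs ys.
by have := mulrC (SeqSub xs : seq_subring) (SeqSub ys) => /(congr1 val).
Qed.

Lemma divring_seq_genPoly a : a \in s -> exists (Q : nat) (l : seq R),
  [/\ {in s, forall x, x ^+ Q = x}, {subset l <= [predD1 s & a]} &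
      'X^Q - 'X = \prod_(x <- l) ('X - x%:P) * ('X - a%:P)].
Proof.
move=> sa; pose a' : seq_subring := SeqSub sa.
exists #|{: seq_subring}|, [seq val x | x <- index_enum seq_subring & x != a'].
split.
- move=> x sx; have := expf_card (SeqSub sx : seq_subring).
  by move/(congr1 val); rewrite rmorphXn.
- move=> y /mapP [x]; rewrite mem_filter => /andP [xa _] ->.
  by rewrite !inE (ssvalP x) andbT -[a]/(val a') val_eqE.
have genPoly : 'X^#|{: seq_subring}| - 'X =
    \prod_(x | x != a') ('X - x%:P) * ('X - a'%:P) :> {poly seq_subring}.
  by rewrite finField_genPoly (bigD1 a') //= mulrC.
have := congr1 (map_poly subring_val) genPoly.
rewrite rmorphB rmorphM /= map_polyXn map_polyX map_polyXsubC rmorph_prod => ->.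
rewrite big_map big_filter; congr (_ * _).
by apply: eq_bigr => x _; rewrite /= map_polyXsubC.
Qed.

End FiniteDivisionSubring.

Section RightHorner.
Variables (R : nzRingType) (a : R).

Lemma horner_mul_evalC (P Q : {poly R}) : (P * Q).[a] = (P * Q.[a]%:P).[a].
Proof.
elim/poly_ind: P => [|P c IH]; first by rewrite !mul0r.
rewrite !mulrDl !hornerD -!mulrA -(commr_polyX Q) -(commr_polyX Q.[a]%:P).
by rewrite !mulrA !hornerMX IH !hornerCM hornerC.
Qed.

(* [rhorner P w] is [\sum_i P`_i * w * a ^+ i]: P evaluated at the right
   multiplication by a, with the coefficients acting on the left. *)
Definition rhorner (P : {poly R}) (w : R) := (P * w%:P).[a].

Lemma rhornerM P Q w : rhorner (P * Q) w = rhorner P (rhorner Q w).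
Proof. by rewrite /rhorner -mulrA horner_mul_evalC. Qed.

Lemma rhornerXsubC c w : rhorner ('X - c%:P) w = w * a - c * w.
Proof.
rewrite /rhorner mulrBl hornerD hornerN -polyCM hornerC -commr_polyX.
by rewrite hornerMX hornerC.
Qed.

Lemma rhornerXnsubX n w : rhorner ('X^n - 'X) w = w * (a ^+ n - a).
Proof.
rewrite /rhorner mulrBl -commr_polyXn -commr_polyX -mulrBr hornerCM.
by rewrite hornerD hornerN hornerXn hornerX.
Qed.

Lemma rhorner_prod_XsubC_eq0 (l : seq R) v : v != 0 ->
  rhorner (\prod_(x <- l) ('X - x%:P)) v = 0 ->
  exists2 mu, mu \in l & exists2 y, y != 0 & y * a = mu * y.
Proof.
elim: l v => [|x l IH] v v_neq0.
  by rewrite big_nil /rhorner mul1r hornerC => v0; rewrite v0 eqxx in v_neq0.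
rewrite big_cons rhornerM; set w := rhorner _ v.
have [w0 _ | w_neq0] := eqVneq w 0.
  by have [mu l_mu] := IH v v_neq0 w0; exists mu; rewrite // inE l_mu orbT.
rewrite rhornerXsubC => /eqP; rewrite subr_eq0 => /eqP wa.
by exists x; [exact: mem_head | exists w].
Qed.

End RightHorner.

Section BoundedExponent.
Variables (R : unitRingType) (p N : nat).
Hypotheses (R_div : is_division_ring R) (p_gt0 : (0 < p)%N) (pR0 : p%:R = 0 :> R).
Hypothesis exprS_eq1 : forall x : R, x != 0 -> x ^+ N.+1 = 1.

Definition power_span (C : seq R) (g : R) : seq R :=
  codom (fun c : {ffun 'I_N.+1 -> seq_sub C} => \sum_(j < N.+1) val (c j) * g ^+ j).

Lemma power_spanP C g x :
  reflect (exists2 c : 'I_N.+1 -> R,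
             forall j, c j \in C & x = \sum_(j < N.+1) c j * g ^+ j)
          (x \in power_span C g).
Proof.
apply: (iffP codomP) => [[c ->] | [c cC ->]].
  by exists (fun j => val (c j)) => // j; apply: valP.
by exists [ffun j => SeqSub (cC j)]; apply: eq_bigr => j _; rewrite ffunE.
Qed.

Lemma invr_torsion (x : R) : x != 0 -> x^-1 = x ^+ N.
Proof. by move=> x_neq0; rewrite -[LHS]mul1r -(exprS_eq1 x_neq0) exprSr mulrK ?R_div. Qed.

Lemma oppr_char (x : R) : - x = x *+ p.-1.
Proof.
by apply/eqP; rewrite eq_sym -addr_eq0 -mulrSr prednK // -mulr_natr pR0 mulr0.
Qed.

Section Closure.
Context {C : seq R} {g : R}.
Hypotheses (C_closed : divring_closed (mem C)) (g_neq0 : g != 0).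
Hypothesis C_conj : {in C, forall c, g * c / g \in C}.
Local Notation S := (power_span C g).

Let C_semiring := GRing.subring_closed_semi (GRing.divring_closedBM C_closed).
Let C0 : 0 \in C := C_semiring.1.1.
Let C1 : 1 \in C := C_semiring.2.1.
Let CD : {in C &, forall x y, x + y \in C} := C_semiring.1.2.
Let CM : {in C &, forall x y, x * y \in C} := C_semiring.2.2.

Lemma power_span0 : 0 \in S.
Proof.
by apply/power_spanP; exists (fun=> 0) => //; rewrite big1 // => j _; rewrite mul0r.
Qed.

Lemma power_spanD : {in S &, forall x y, x + y \in S}.
Proof.
move=> _ _ /power_spanP [c cC ->] /power_spanP [d dC ->]; apply/power_spanP.
exists (fun j => c j + d j) => [j|]; first exact: CD.
by rewrite -big_split; apply: eq_bigr => j _; rewrite mulrDl.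
Qed.

Lemma power_span_sum (I : Type) (r : seq I) (P : pred I) (F : I -> R) :
  (forall i, P i -> F i \in S) -> \sum_(i <- r | P i) F i \in S.
Proof.
move=> FS; apply: (big_ind (fun x => x \in S)) => //.
  exact: power_span0.
exact: power_spanD.
Qed.

Lemma power_span_mulC c : c \in C -> {in S, forall x, c * x \in S}.
Proof.
move=> cC _ /power_spanP [d dC ->]; apply/power_spanP.
exists (fun j => c * d j) => [j|]; first exact: CM.
by rewrite mulr_sumr; apply: eq_bigr => j _; rewrite mulrA.
Qed.

(* Since g ^+ N.+1 = 1, multiplying by g shifts the exponents cyclically. *)
Lemma power_span_mulg : {in S, forall x, g * x \in S}.
Proof.
move=> _ /power_spanP [c cC ->]; apply/power_spanP.
exists (fun j => g * c (ord_pred j) / g) => [j|]; first exact: C_conj.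
rewrite mulr_sumr [RHS](reindex_inj (@ordS_inj _)); apply: eq_bigr => j _.
by rewrite ordSK /= (expr_mod _ (exprS_eq1 g_neq0)) exprS !mulrA divrK ?R_div.
Qed.

Lemma power_spanC : {subset C <= S}.
Proof.
move=> c cC; apply/power_spanP.
exists (fun j => if j == ord0 then c else 0) => [j|]; first by case: ifP.
by rewrite big_ord_recl eqxx expr0 mulr1 big1 ?addr0 // => j _; rewrite mul0r.
Qed.

Lemma power_spanM : {in S &, forall x y, x * y \in S}.
Proof.
move=> _ y /power_spanP [c cC ->] yS; rewrite mulr_suml.
apply: power_span_sum => j _; rewrite -mulrA power_span_mulC //.
elim: (j : nat) => [|k IH]; first by rewrite mul1r.
by rewrite exprS -mulrA power_span_mulg.
Qed.

Lemma power_spanX x k : x \in S -> x ^+ k \in S.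
Proof.
move=> xS; elim: k => [|k IH]; first by rewrite expr0 power_spanC.
by rewrite exprS power_spanM.
Qed.

Lemma power_span_g : g \in S.
Proof. by have := power_span_mulg (power_spanC C1); rewrite mulr1. Qed.

Lemma power_span_divring_closed : divring_closed (mem S).
Proof.
split; first exact: power_spanC.
  move=> x y xS yS; rewrite oppr_char power_spanD //.
  by elim: p.-1 => [|k IH]; rewrite ?mulr0n ?power_span0 // mulrS power_spanD.
move=> x y xS yS; have [-> | y_neq0] := eqVneq y 0.
  by rewrite invr0 mulr0 power_span0.
by rewrite invr_torsion // power_spanM ?power_spanX.
Qed.

End Closure.

Definition nat_image : seq R := [seq i%:R | i <- iota 0 p].

Lemma nat_image_natr k : k%:R \in nat_image.
Proof.
rewrite [k](divn_eq k p) natrD natrM pR0 mulr0 add0r.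
by apply: map_f; rewrite mem_iota ltn_pmod.
Qed.

Lemma nat_image_divring_closed : divring_closed (mem nat_image).
Proof.
split; first exact: (nat_image_natr 1).
  move=> _ _ /mapP [i _ ->] /mapP [j _ ->].
  by rewrite oppr_char -mulrnA -natrD nat_image_natr.
move=> _ _ /mapP [i _ ->] /mapP [j _ ->].
have [-> | j_neq0] := eqVneq (j%:R : R) 0.
  by rewrite invr0 mulr0 (nat_image_natr 0).
by rewrite invr_torsion // -natrX -natrM nat_image_natr.
Qed.

Lemma nat_image_conj g : g != 0 -> {in nat_image, forall c, g * c / g \in nat_image}.
Proof.
by move=> g_neq0 _ /mapP [i _ ->]; rewrite (commr_nat g i) mulrK ?R_div ?nat_image_natr.
Qed.

Theorem bounded_exponent_comm (a b : R) : a * b = b * a.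
Proof.
have [// | nab] := eqVneq (a * b) (b * a); exfalso.
have a_neq0 : a != 0 by apply: contraNneq nab => ->; rewrite mul0r mulr0.
have F_closed := nat_image_divring_closed.
have F_conj := nat_image_conj a_neq0.
pose K := power_span nat_image a.
have K_closed : divring_closed (mem K) := power_span_divring_closed F_closed a_neq0 F_conj.
have aK : a \in K := power_span_g F_closed a_neq0 F_conj.
have [Q [l [KQ lK genQ]]] := divring_seq_genPoly R_div K_closed aK.
have v_neq0 : b * a - a * b != 0 by rewrite subr_eq0 eq_sym.
have : rhorner a (\prod_(x <- l) ('X - x%:P)) (b * a - a * b) = 0.
  by rewrite -rhornerXsubC -rhornerM -genQ rhornerXnsubX KQ // subrr mulr0.
case/(rhorner_prod_XsubC_eq0 v_neq0) => mu /lK /andP [mu_neq_a muK] [y y_neq0 ya].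
have yaX j : y * a ^+ j / y = mu ^+ j.
  elim: j => [|j IH]; first by rewrite mulr1 divrr ?R_div.
  by rewrite !exprSr -IH -[mu in RHS](mulrK (R_div y_neq0)) -ya !mulrA divrK ?R_div.
have K_conj : {in K, forall c, y * c / y \in K}.
  move=> _ /power_spanP [c cC ->]; rewrite mulr_sumr mulr_suml.
  apply: (power_span_sum F_closed) => j _.
  have /mapP [i _ ->] := cC j.
  rewrite mulrA (commr_nat y i) -!mulrA [y * _]mulrA yaX.
  apply: (power_span_mulC F_closed (nat_image_natr i)).
  exact: (power_spanX F_closed a_neq0 F_conj).
have yK_closed := power_span_divring_closed K_closed y_neq0 K_conj.
have := divring_seq_comm R_div yK_closed (power_spanC K_closed aK)
  (power_span_g K_closed y_neq0 K_conj).
by rewrite ya => /(mulIr (R_div y_neq0)) /eqP; rewrite eq_sym (negbTE mu_neq_a).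
Qed.

End BoundedExponent.

Lemma natr_eq0_of_torsion (R : nzRingType) N : (0 < N)%N ->
  (forall x : R, x != 0 -> x ^+ N = 1) -> exists2 p, (0 < p)%N & p%:R = 0 :> R.
Proof.
move=> N_gt0 expN1; have [two0 | two_neq0] := eqVneq (2%:R : R) 0.
  by exists 2%N.
exists (2 ^ N - 1)%N; first by rewrite subn_gt0 -{1}(expn0 2) ltn_exp2l.
by rewrite natrB ?expn_gt0 // natrX expN1 // subrr.
Qed.

Section PcharPowers.
Variables (R : nzRingType) (p : nat).
Hypothesis pcharRp : p \in [pchar R].

Lemma exprD_pchar_comm v (x y : R) :
  GRing.comm x y -> (x + y) ^+ (p ^ v) = x ^+ (p ^ v) + y ^+ (p ^ v).
Proof.
move=> cxy; elim: v => [|v IH]; first by rewrite expn0 !expr1.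
rewrite expnSr !exprM IH -!(pFrobenius_autE pcharRp) pFrobenius_autD_comm //.
exact/commrX/commr_sym/commrX/commr_sym.
Qed.

Lemma exprN_pchar v (x : R) : (- x) ^+ (p ^ v) = - x ^+ (p ^ v).
Proof.
by apply: exprNn_pchar; rewrite pnatX (pnatE _ (pcharf_prime pcharRp)) pcharRp.
Qed.

End PcharPowers.

Section InnerDerivation.
Variable R : nzRingType.

(* The sign convention makes [ad a w = rhorner a ('X - a%:P) w]. *)
Definition ad (a w : R) := w * a - a * w.

Lemma iter_ad j (a w : R) : iter j (ad a) w = rhorner a (('X - a%:P) ^+ j) w.
Proof.
elim: j => [|j IH]; first by rewrite expr0 /rhorner mul1r hornerC.
by rewrite iterS IH exprS rhornerM rhornerXsubC.
Qed.

Lemma iter_ad_pchar p v (a w : R) :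
  p \in [pchar R] -> iter (p ^ v) (ad a) w = ad (a ^+ (p ^ v)) w.
Proof.
move=> pcharRp; have pcharPp : p \in [pchar {poly R}] by rewrite pchar_poly.
rewrite iter_ad (exprD_pchar_comm pcharPp); last exact/commrN/commr_sym/commr_polyX.
rewrite (exprN_pchar pcharPp) -rmorphXn /= /rhorner mulrBl -commr_polyXn -polyCM.
by rewrite hornerD hornerN hornerC hornerCM hornerXn.
Qed.

End InnerDerivation.

Definition central (R : nzRingType) (x : R) := forall y : R, GRing.comm x y.

Section DivisionRing.
Variable R : unitRingType.
Hypothesis R_div : is_division_ring R.

Lemma expr_conj (x y : R) k : y \is a GRing.unit ->
  (y^-1 * x * y) ^+ k = y^-1 * x ^+ k * y.
Proof.
move=> yU; elim: k => [|k IH]; first by rewrite !expr0 mulr1 mulVr.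
by rewrite exprS IH !mulrA mulrK // -(mulrA _ x) -exprS.
Qed.

Lemma central_expr_of_swap n :
  (forall a b : R, (a * b) ^+ n = (b * a) ^+ n) -> forall x : R, central (x ^+ n).
Proof.
move=> swap x y; have [-> | y_neq0] := eqVneq y 0.
  by rewrite /GRing.comm mulr0 mul0r.
have := swap y (y^-1 * x); rewrite mulVKr ?R_div // expr_conj ?R_div // => xn_conj.
by rewrite /GRing.comm [in RHS]xn_conj !mulrA divrr ?R_div // mul1r.
Qed.

Lemma uniq_roots_central (rs : seq R) :
  uniq rs -> {in rs, forall t, central t} -> uniq_roots rs.
Proof.
elim: rs => [//|t rs IH] /= /andP [t_rs rs_uniq] rs_central.
rewrite IH ?andbT // => [|s s_rs]; last by apply: rs_central; rewrite inE s_rs orbT.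
apply/allP => s s_rs; rewrite /diff_roots rs_central ?mem_head ?eqxx //=.
by apply: R_div; rewrite subr_eq0; apply: contraNneq t_rs => <-.
Qed.

Lemma comm_of_central_shifts (b y : R) m (rs : seq R) :
  m%:R != 0 :> R -> uniq rs -> (m < size rs)%N -> {in rs, forall s, central s} ->
  {in rs, forall s, GRing.comm ((b + s) ^+ m) y} -> GRing.comm b y.
Proof.
case: m => [|m]; first by rewrite eqxx.
move=> m_neq0 rs_uniq rs_size rs_central shift_comm.
(* P.[s] = (b + s) ^+ m.+1 * y - y * (b + s) ^+ m.+1 for central s. *)
pose E j := (b ^+ (m.+1 - j) * y - y * b ^+ (m.+1 - j)) *+ 'C(m.+1, j).
pose P := \poly_(j < m.+2) E j.
have P_roots : all (root P) rs.
  apply/allP => s s_rs; have sC := rs_central s s_rs.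
  rewrite /root horner_poly; apply/eqP.
  rewrite -[RHS](subrr ((b + s) ^+ m.+1 * y)) {2}(shift_comm s s_rs).
  rewrite exprDn_comm; last exact/commr_sym/sC.
  rewrite mulr_suml mulr_sumr -sumrB; apply: eq_bigr => j _.
  rewrite /E mulrnAl mulrnAr -mulrnBl mulrnAl; congr (_ *+ _).
  by rewrite mulrBl -!mulrA (commr_sym (commrX j (commr_sym (sC y)))) !mulrA.
have P_eq0 : P = 0.
  apply: contraTeq rs_size => P_neq0; rewrite -leqNgt -ltnS.
  have := max_ring_poly_roots P_neq0 P_roots (uniq_roots_central rs_uniq rs_central).
  by move/leq_trans; apply; rewrite size_poly.
have := congr1 (fun P : {poly R} => P`_m) P_eq0.
rewrite coef_poly coef0 ltnS leqnSn /E subSnn binSn expr1 -mulr_natl.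
rewrite -(mulr0 (m.+1)%:R) => /(mulrI (R_div m_neq0)) /eqP.
by rewrite subr_eq0 => /eqP.
Qed.

Lemma pchar_expr_inj p v (t t' : R) : p \in [pchar R] ->
  GRing.comm t t' -> t ^+ (p ^ v) = t' ^+ (p ^ v) -> t = t'.
Proof.
move=> pcharRp ctt' tt'q; apply/eqP; rewrite -subr_eq0; apply/negPn/negP.
move=> /R_div /(unitrX (p ^ v)); rewrite (exprD_pchar_comm pcharRp); last exact: commrN.
by rewrite (exprN_pchar pcharRp) tt'q subrr unitr0.
Qed.

Lemma ad_eq1_of_nilpotent (a b : R) k :
  iter k (ad a) b = 0 -> ad a b != 0 -> exists x, ad a x = 1.
Proof.
move=> ab_nil ab_neq0.
have ex_nil : exists k, iter k (ad a) b == 0 by exists k; apply/eqP.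
case: (ex_minnP ex_nil) => -[|[|j]] /eqP j_nil j_min.
- by rewrite /= in j_nil; rewrite j_nil /ad mul0r mulr0 subrr eqxx in ab_neq0.
- by rewrite /= in j_nil; rewrite j_nil eqxx in ab_neq0.
set y := iter j (ad a) b; set c := ad a y.
have c_neq0 : c != 0 by apply/negP => c0; have := j_min j.+1 c0; rewrite ltnn.
have ac : GRing.comm a c by apply/eqP; rewrite eq_sym -subr_eq0; apply/eqP.
exists (y / c); rewrite /ad -mulrA -(commrV ac) !mulrA -mulrBl.
by rewrite -[y * a - a * y]/c divrr ?R_div.
Qed.

Lemma comm_of_central_pchar_expr p v : p \in [pchar R] ->
  (forall x : R, central (x ^+ (p ^ v))) -> forall a b : R, GRing.comm a b.
Proof.
move=> pcharRp qC a b; have [// | ab_neq] := eqVneq (a * b) (b * a); exfalso.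
have [x ax1] : exists x, ad a x = 1.
  apply: (@ad_eq1_of_nilpotent a b (p ^ v)%N).
    by rewrite iter_ad_pchar // /ad qC subrr.
  by rewrite /ad subr_eq0 eq_sym.
have xa : x * a = a * x + 1 by rewrite addrC -ax1 /ad subrK.
pose u := a * x.
have ua : u * a = a * (u + 1) by rewrite /u -mulrA xa mulrDr mulr1.
have uXa : forall k, u ^+ k * a = a * (u + 1) ^+ k.
  elim=> [|k IH]; first by rewrite !expr0 mul1r mulr1.
  by rewrite exprSr -mulrA ua mulrA IH -mulrA -exprSr.
have := uXa (p ^ v)%N; rewrite (exprD_pchar_comm pcharRp); last exact: commr1.
rewrite expr1n mulrDr mulr1 -(qC u a) -[LHS]addr0 => /addrI a0.
by move: ax1; rewrite -a0 /ad mulr0 mul0r subrr => /eqP; rewrite eq_sym oner_eq0.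
Qed.

Lemma pchar_of_natr_eq0 n : (0 < n)%N -> n%:R = 0 :> R -> exists p, p \in [pchar R].
Proof.
elim/ltn_ind: n => n IH n_gt0 n0.
have n_gt1 : (1 < n)%N.
  rewrite ltn_neqAle eq_sym n_gt0 andbT; apply/eqP => n1.
  by move/eqP: n0; rewrite n1 oner_eq0.
have [pn0 | pn_neq0] := eqVneq ((pdiv n)%:R : R) 0.
  by exists (pdiv n); rewrite inE pdiv_prime // pn0 eqxx.
have pn_gt1 := prime_gt1 (pdiv_prime n_gt1).
apply: (IH (n %/ pdiv n)%N); first by rewrite ltn_Pdiv.
  by rewrite divn_gt0 ?(ltnW pn_gt1) // dvdn_leq // pdiv_dvd.
by apply: (mulIr (R_div pn_neq0)); rewrite mul0r -natrM divnK ?pdiv_dvd.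
Qed.

Lemma comm_of_central_expn n (ts : seq R) : (0 < n)%N ->
  (forall x : R, central (x ^+ n)) -> uniq ts -> (n < size ts)%N ->
  {in ts, forall t, central t} -> forall a b : R, GRing.comm a b.
Proof.
move=> n_gt0 nC ts_uniq ts_size ts_central.
have [n0 | n_neq0] := eqVneq (n%:R : R) 0; last first.
  move=> a b; apply: (comm_of_central_shifts n_neq0 ts_uniq ts_size ts_central).
  by move=> t _; apply: nC.
have [p pcharRp] := pchar_of_natr_eq0 n_gt0 n0.
have p_prime := pcharf_prime pcharRp.
have [m p'm nE] := pfactor_coprime p_prime n_gt0; set v := logn p n in nE.
apply: (@comm_of_central_pchar_expr p v pcharRp) => x y.
have m_neq0 : m%:R != 0 :> R by rewrite -(dvdn_pcharf pcharRp) -prime_coprime.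
apply: (comm_of_central_shifts (rs := [seq t ^+ (p ^ v) | t <- ts]) m_neq0).
- rewrite map_inj_in_uniq // => t t' t_ts _; apply: (pchar_expr_inj pcharRp).
  exact: ts_central.
- rewrite size_map (leq_ltn_trans _ ts_size) // nE leq_pmulr //.
  by rewrite expn_gt0 prime_gt0.
- move=> _ /mapP [t t_ts ->] z; exact/commr_sym/commrX/commr_sym/ts_central.
- move=> _ /mapP [t t_ts ->]; rewrite -(exprD_pchar_comm pcharRp); last first.
    exact/commr_sym/ts_central.
  by rewrite -exprM mulnC -nE; apply: nC.
Qed.

Lemma expr_fact_eq1 k n (x : R) : x \is a GRing.unit ->
  ~~ uniq [seq x ^+ (k * i) | i <- iota 0 n.+1] -> x ^+ (k * n`!) = 1.
Proof.
move=> xU /(uniqPn 0) [i [j [ij]]]; rewrite size_map size_iota => jn.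
rewrite !(nth_map 0) ?size_iota ?(ltn_trans ij) // !nth_iota ?(ltn_trans ij) //.
rewrite !add0n => xij; have xji : x ^+ (k * (j - i)) = 1.
  apply: (mulrI (unitrX (k * i) xU)).
  by rewrite mulr1 -exprD -mulnDr subnKC ?xij // ltnW.
have /dvdnP [d ->] : (j - i %| n`!)%N.
  by apply: dvdn_fact; rewrite subn_gt0 ij (leq_trans (leq_subr i j)) // -ltnS.
by rewrite mulnCA mulnC exprM xji expr1n.
Qed.

End DivisionRing.

Theorem theorem2p1 (F : fieldType) (R : unitAlgType F)
  (hdiv : is_division_ring R) (hnc : noncommutative R) :
  forall n : nat, (0 < n)%N ->
    exists alpha beta : R, (alpha * beta) ^+ n != (beta * alpha) ^+ n.
Proof.
move=> n n_gt0.
case: (classic (exists alpha beta : R, (alpha * beta) ^+ n != (beta * alpha) ^+ n))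
  => // no_pair.
have swap (a b : R) : (a * b) ^+ n = (b * a) ^+ n.
  by apply/eqP/negPn/negP => ab_neq; apply: no_pair; exists a, b.
have nC := central_expr_of_swap hdiv swap.
suff comm (a b : R) : a * b = b * a by have [a [b]] := hnc; rewrite comm eqxx.
have [[x x_uniq] | small_center] :=
  classic (exists x : R, uniq [seq x ^+ (n * i) | i <- iota 0 n.+1]).
  apply: (comm_of_central_expn hdiv n_gt0 nC x_uniq); first by rewrite size_map size_iota.
  by move=> _ /mapP [i _ ->] y; rewrite exprM; apply/commr_sym/commrX/commr_sym/nC.
have N_gt0 : (0 < n * n`!)%N by rewrite muln_gt0 n_gt0 fact_gt0.
have expN1 (x : R) : x != 0 -> x ^+ (n * n`!) = 1.
  move=> x_neq0; apply: expr_fact_eq1 (hdiv _ x_neq0) _.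
  by apply/negP => x_uniq; apply: small_center; exists x.
have [p p_gt0 pR0] := natr_eq0_of_torsion N_gt0 expN1.
apply: (bounded_exponent_comm hdiv p_gt0 pR0 (N := (n * n`!).-1)) => x x_neq0.
by rewrite prednK // expN1.
Qed.
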